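(* Let $H$ be a complex Hilbert space and let $T$ be a densely defined closed linear operator in $H$ with domain $D(T)$ such that $D(T)\subset D(T^* )$. Suppose $T$ is nilpotent, i.e. there is $n\in\mathbb{N}$ such that $T^n$ is well defined with $D(T^n)=D(T)$ and $T^n x=0$ for all $x\in D(T)$. Then $T\in B(H)$ (i.e. $D(T)=H$ and $T$ is bounded). In particular, if $T$ is a closed densely defined nilpotent operator which is symmetric or hyponormal, then $T=0$ everywhere on $H$.
   Context: Products of unbounded operators are taken on natural domains: $D(ST)=\{x\in D(T): Tx\in D(S)\}$, and $T^n$ is defined accordingly. Nilpotence of $T$ means $D(T^n)=D(T^{n-1})=\dots=D(T)$ and $T^n=0$ on $D(T)$. A densely defined $T$ is symmetric if $T\subset T^*$ (i.e. $D(T)\subset D(T^* )$ and $T^*=T$ on $D(T)$). A densely defined $T$ is hyponormal if $D(T)\subset D(T^* )$ and $\|T^*x\|\leq\|Tx\|$ for all $x\in D(T)$. $B(H)$ is the algebra of everywhere defined bounded operators on $H$. *)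

From HB Require Import structures.
From mathcomp Require Import all_boot all_order all_algebra.
From mathcomp Require Import complex.
From mathcomp Require Import reals.
Set Implicit Arguments. Unset Strict Implicit. Unset Printing Implicit Defensive.
Import Order.TTheory GRing.Theory Num.Theory.
Local Open Scope ring_scope.

Record hilbert (R : realType) := Hilbert {
  hcarrier :> lmodType R[i];
  inner : hcarrier -> hcarrier -> R[i];
  inner_linear : forall (a : R[i]) (x y z : hcarrier),
      inner (a *: x + y) z = a * inner x z + inner y z;
  inner_conjsym : forall x y : hcarrier, inner y x = conjc (inner x y);
  inner_ge0 : forall x : hcarrier, 0 <= inner x x;
  inner_eq0 : forall x : hcarrier, inner x x = 0 -> x = 0;
  inner_complete : forall u : nat -> hcarrier,
      (forall e : R, 0 < e -> exists N : nat, forall m n : nat,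
          (N <= m)%N -> (N <= n)%N ->
          Num.sqrt (complex.Re (inner (u m - u n) (u m - u n))) < e) ->
      exists l : hcarrier, forall e : R, 0 < e -> exists N : nat, forall n : nat,
          (N <= n)%N -> Num.sqrt (complex.Re (inner (u n - l) (u n - l))) < e
}.

Section Defs.
Context {R : realType} {H : hilbert R}.

Definition hnorm (x : H) : R := Num.sqrt (complex.Re (inner x x)).

(* A (possibly unbounded) operator in H: a domain D (a linear subspace)
   and a map T, whose values outside D are irrelevant. *)
Definition lin_op (D : H -> Prop) (T : H -> H) : Prop :=
  D 0 /\
  (forall (a : R[i]) (x y : H), D x -> D y ->
     D (a *: x + y) /\ T (a *: x + y) = a *: T x + T y).

Definition densely_defined (D : H -> Prop) : Prop :=
  forall (x : H) (e : R), 0 < e -> exists y, D y /\ hnorm (x - y) < e.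

Definition cvg_to (u : nat -> H) (l : H) : Prop :=
  forall e : R, 0 < e -> exists N : nat, forall n : nat,
    (N <= n)%N -> hnorm (u n - l) < e.

Definition closed_op (D : H -> Prop) (T : H -> H) : Prop :=
  forall (u : nat -> H) (x y : H), (forall k, D (u k)) ->
    cvg_to u x -> cvg_to (fun k => T (u k)) y -> D x /\ T x = y.

Definition adj_at (D : H -> Prop) (T : H -> H) (y z : H) : Prop :=
  forall x, D x -> inner (T x) y = inner x z.

Definition adj_dom (D : H -> Prop) (T : H -> H) (y : H) : Prop :=
  exists z, adj_at D T y z.

Fixpoint pow_dom (D : H -> Prop) (T : H -> H) (k : nat) : H -> Prop :=
  match k with
  | 0 => fun _ => True
  | k'.+1 => fun x => pow_dom D T k' x /\ D (iter k' T x)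
  end.

Definition nilpotent_op (D : H -> Prop) (T : H -> H) : Prop :=
  exists n : nat, (0 < n)%N /\
    (forall k, (1 <= k <= n)%N -> forall x, pow_dom D T k x <-> D x) /\
    (forall x, D x -> iter n T x = 0).

Definition symmetric_op (D : H -> Prop) (T : H -> H) : Prop :=
  forall y, D y -> adj_at D T y (T y).

Definition hyponormal_op (D : H -> Prop) (T : H -> H) : Prop :=
  forall y, D y -> exists z, adj_at D T y z /\ hnorm z <= hnorm (T y).

End Defs.

From HB Require Import structures.
From mathcomp Require Import all_boot all_order all_algebra.
From mathcomp Require Import complex reals boolp classical_sets.
From mathcomp Require Import ring lra.
Import Order.TTheory GRing.Theory Num.Theory.
Set Implicit Arguments. Unset Strict Implicit. Unset Printing Implicit Defensive.
Local Open Scope ring_scope.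
Local Open Scope complex_scope.

(* Write ||x||_T := ||x|| + ||T x|| for the graph norm; as T is closed, (D(T), ||.||_T) is
   complete.  Each functional x |-> Re <T w, x> is ||.||_T-bounded, and D(T) ⊂ D(T^* ) makes
   the family { x |-> Re <T w, x> / ||w|| } pointwise bounded on D(T), so the uniform
   boundedness principle (Sokal's proof, which needs no Baire category) gives
   Re <T w, x> <= M ||w|| ||x||_T.  For w = T^k x and x = T^(k+1) x this reads
   ||T^(k+1) x||^2 <= M ||T^k x|| (||T^(k+1) x|| + ||T^(k+2) x||), and descending from
   T^n x = 0 bounds ||T x|| by a constant times ||x||.  A closed operator bounded on a dense
   domain is everywhere defined.  If T is moreover symmetric or hyponormal, T^2 v = 0 forces
   ||T v||^2 = <v, T^* T v> = 0, so nilpotence collapses to T = 0. *)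

Section Geometric.
Variable R : realType.

Lemma exp3V_gt0 n : 0 < (3 : R) ^- n.
Proof. by rewrite invr_gt0 exprn_gt0. Qed.

Lemma exp3VS n : (3 : R) ^- n = 3 * 3 ^- n.+1.
Proof. by rewrite exprS invfM mulrA mulfV ?mul1r // pnatr_eq0. Qed.

Lemma exp3V_le m n : (m <= n)%N -> (3 : R) ^- n <= 3 ^- m.
Proof. by move=> mn; rewrite -!exprVn ler_wiXn2l // ?invr_ge0 ?invf_le1 ?ler1n. Qed.

Lemma exp3V_small (e : R) : 0 < e -> exists N, forall n, (N <= n)%N -> 3 ^- n < e.
Proof.
move=> e_gt0; have /archi_boundP : 0 <= e^-1 by rewrite invr_ge0 ltW.
set N := Num.Def.archi_bound _.
move=> eVN; exists N => n /exp3V_le/le_lt_trans; apply.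
rewrite -[e]invrK ltf_pV2 ?posrE ?exprn_gt0 ?invr_gt0 //.
by apply: lt_le_trans eVN _; rewrite -natrX ler_nat ltnW // ltn_expl.
Qed.

End Geometric.

Section InnerProduct.
Variables (R : realType) (H : hilbert R).
Implicit Types (x y z : H) (a : R[i]) (t : R).

Lemma scaleN1C (V : lmodType R[i]) (v : V) : (-1)%:C *: v = - v.
Proof. by rewrite rmorphN1 scaleN1r. Qed.

Lemma inner0l z : inner 0 z = 0.
Proof.
have := inner_linear 1 0 0 z; rewrite scale1r mul1r addr0.
by move/(congr1 (fun c => c - inner 0 z)); rewrite subrr addrK => <-.
Qed.

Lemma innerDl x y z : inner (x + y) z = inner x z + inner y z.
Proof. by have := inner_linear 1 x y z; rewrite scale1r mul1r. Qed.

Lemma innerZl a x z : inner (a *: x) z = a * inner x z.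
Proof. by have := inner_linear a x 0 z; rewrite addr0 inner0l addr0. Qed.

Lemma inner0r z : inner z 0 = 0.
Proof. by rewrite inner_conjsym inner0l conjc0. Qed.

Lemma innerDr x y z : inner z (x + y) = inner z x + inner z y.
Proof. by rewrite !(inner_conjsym _ z) innerDl rmorphD. Qed.

Lemma innerZr a x z : inner z (a *: x) = conjc a * inner z x.
Proof. by rewrite !(inner_conjsym _ z) innerZl rmorphM. Qed.

Definition rinner x y : R := complex.Re (inner x y).

Lemma rinnerC x y : rinner x y = rinner y x.
Proof. by rewrite /rinner (inner_conjsym x y); case: (inner x y). Qed.

Lemma rinnerDr x y z : rinner z (x + y) = rinner z x + rinner z y.
Proof. by rewrite /rinner innerDr; case: (inner z x); case: (inner z y). Qed.

Lemma rinnerZr t x z : rinner z (t%:C *: x) = t * rinner z x.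
Proof. by rewrite /rinner innerZr conjc_real; case: (inner z x) => u v /=; rewrite mul0r subr0. Qed.

Lemma rinnerNr x z : rinner z (- x) = - rinner z x.
Proof. by rewrite -scaleN1C rinnerZr mulN1r. Qed.

Lemma rinnerDl x y z : rinner (x + y) z = rinner x z + rinner y z.
Proof. by rewrite !(rinnerC _ z) rinnerDr. Qed.

Lemma rinnerZl t x z : rinner (t%:C *: x) z = t * rinner x z.
Proof. by rewrite !(rinnerC _ z) rinnerZr. Qed.

Lemma rinnerNl x z : rinner (- x) z = - rinner x z.
Proof. by rewrite !(rinnerC _ z) rinnerNr. Qed.

Lemma rinner0r z : rinner z 0 = 0.
Proof. by rewrite /rinner inner0r. Qed.

Lemma rinner_ge0 x : 0 <= rinner x x.
Proof. by have := inner_ge0 x; rewrite lecE => /andP[]. Qed.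

Lemma hnormE x : hnorm x = Num.sqrt (rinner x x).
Proof. by []. Qed.

Lemma hnorm_ge0 x : 0 <= hnorm x.
Proof. exact: sqrtr_ge0. Qed.

Lemma hnorm_sq x : hnorm x ^+ 2 = rinner x x.
Proof. by rewrite hnormE sqr_sqrtr // rinner_ge0. Qed.

Lemma hnorm0 : hnorm (0 : H) = 0.
Proof. by rewrite hnormE rinner0r sqrtr0. Qed.

Lemma hnorm_eq0 x : hnorm x = 0 -> x = 0.
Proof.
move=> x0; apply: inner_eq0.
have : rinner x x = 0 by rewrite -hnorm_sq x0 expr0n.
have := inner_ge0 x; rewrite lecE /rinner.
by case: (inner x x) => u v /= /andP[/eqP -> _] ->.
Qed.

Lemma hnormZ t x : hnorm (t%:C *: x) = `|t| * hnorm x.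
Proof. by rewrite !hnormE rinnerZl rinnerZr mulrA -expr2 sqrtrM ?sqr_ge0 // sqrtr_sqr. Qed.

Lemma hnormN x : hnorm (- x) = hnorm x.
Proof. by rewrite -scaleN1C hnormZ normrN1 mul1r. Qed.

Lemma hnormB x y : hnorm (x - y) = hnorm (y - x).
Proof. by rewrite -hnormN opprB. Qed.

Lemma rinner_le x y : rinner x y <= hnorm x * hnorm y.
Proof.
have := rinner_ge0 ((hnorm y)%:C *: x - (hnorm x)%:C *: y).
rewrite rinnerDl !rinnerDr !rinnerNl !rinnerNr !rinnerZl !rinnerZr (rinnerC y x) -!hnorm_sq.
have := hnorm_ge0 x; have := hnorm_ge0 y.
have [xy_gt0|] := ltrP 0 (hnorm x * hnorm y); first by nra.
rewrite le_eqVlt ltNge mulr_ge0 ?hnorm_ge0 // orbF mulf_eq0.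
by case/orP => /eqP/hnorm_eq0 ->; rewrite /rinner ?inner0l ?inner0r hnorm0 ?mul0r ?mulr0.
Qed.

Lemma cauchy_schwarz x y : `|rinner x y| <= hnorm x * hnorm y.
Proof.
rewrite ler_norml rinner_le andbT.
by have := rinner_le (- x) y; rewrite rinnerNl hnormN; lra.
Qed.

Lemma hnormD x y : hnorm (x + y) <= hnorm x + hnorm y.
Proof.
have := hnorm_sq (x + y); rewrite rinnerDl !rinnerDr (rinnerC y x) -!hnorm_sq.
have := rinner_le x y; have := hnorm_ge0 x; have := hnorm_ge0 y; have := hnorm_ge0 (x + y).
nra.
Qed.

End InnerProduct.

Section UniformBoundedness.
Variables (R : realType) (H : hilbert R) (D : H -> Prop) (p : H -> R).
Hypotheses (subspace0 : D 0) (subspaceD : forall x y, D x -> D y -> D (x + y))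
  (subspaceZ : forall (t : R) x, D x -> D (t%:C *: x)).
Hypotheses (seminorm_ge0 : forall x, 0 <= p x)
  (seminormD : forall x y, D x -> D y -> p (x + y) <= p x + p y)
  (seminormZ : forall (t : R) x, D x -> p (t%:C *: x) = `|t| * p x).
Hypothesis seminorm_complete : forall u : nat -> H, (forall n, D (u n)) ->
  (forall e : R, 0 < e -> exists N, forall m n, (N <= m)%N -> (N <= n)%N -> p (u m - u n) < e) ->
  exists2 l, D l & forall e : R, 0 < e -> exists N, forall n, (N <= n)%N -> p (u n - l) < e.
Implicit Types (x y : H) (f : H -> R).

Lemma subspaceN x : D x -> D (- x).
Proof. by rewrite -scaleN1C; apply: subspaceZ. Qed.

Lemma subspaceB x y : D x -> D y -> D (x - y).
Proof. by move=> Dx Dy; apply: subspaceD => //; apply: subspaceN. Qed.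

Lemma seminorm0 : p 0 = 0.
Proof. by have := seminormZ 0 subspace0; rewrite rmorph0 scale0r normr0 mul0r. Qed.

Lemma seminormN x : D x -> p (- x) = p x.
Proof. by move=> Dx; rewrite -scaleN1C seminormZ // normrN1 mul1r. Qed.

Lemma seminormB x y : D x -> D y -> p (x - y) = p (y - x).
Proof. by move=> Dx Dy; rewrite -seminormN ?opprB //; apply: subspaceB. Qed.

Definition bounded_functional f :=
  [/\ forall x y, D x -> D y -> f (x + y) = f x + f y,
      forall (t : R) x, D x -> f (t%:C *: x) = t * f x &
      exists K, forall x, D x -> `|f x| <= K * p x].

Definition opnorm f := sup (f @` [set x | D x /\ p x <= 1]).

Section BoundedFunctional.
Variable f : H -> R.
Hypothesis f_bounded : bounded_functional f.

Lemma functional0 : f 0 = 0.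
Proof. by case: f_bounded => _ fZ _; have := fZ 0 0 subspace0; rewrite rmorph0 scale0r mul0r. Qed.

Lemma functionalB x y : D x -> D y -> f (x - y) = f x - f y.
Proof.
case: f_bounded => fD fZ _ Dx Dy.
rewrite fD //; last exact: subspaceN.
by rewrite -scaleN1C fZ // mulN1r.
Qed.

Lemma opnorm_has_sup : has_sup (f @` [set x | D x /\ p x <= 1]).
Proof.
case: f_bounded => _ _ [K fK]; split; first by exists (f 0), 0 => //; rewrite /= seminorm0.
exists `|K| => _ [x [Dx px_le1] <-].
have := fK x Dx; have := seminorm_ge0 x; have := ler_norm (f x); have := ler_norm K.
have := normr_ge0 K; nra.
Qed.

Lemma opnorm_ge0 : 0 <= opnorm f.
Proof. by apply: sup_upper_bound opnorm_has_sup _ _; exists 0; rewrite /= ?seminorm0 ?functional0. Qed.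

Lemma ler_opnorm x : D x -> f x <= opnorm f * p x.
Proof.
case: f_bounded => _ fZ [K fK] Dx; have [px_gt0|px_le0] := ltrP 0 (p x).
  rewrite -ler_pdivrMr // mulrC -fZ //.
  apply: sup_upper_bound opnorm_has_sup _ _; exists ((p x)^-1%:C *: x) => //; split; first exact: subspaceZ.
  by rewrite seminormZ // ger0_norm ?invr_ge0 ?(ltW px_gt0) // mulVf ?gt_eqF.
have px0 : p x = 0 by apply/le_anti; rewrite px_le0 seminorm_ge0.
by have := fK x Dx; rewrite px0 !mulr0 normr_le0 => /eqP ->.
Qed.

Lemma ler_norm_opnorm x : D x -> `|f x| <= opnorm f * p x.
Proof.
move=> Dx; rewrite ler_norml ler_opnorm // andbT lerNl -(seminormN Dx).
by have := ler_opnorm (subspaceN Dx); rewrite -{1}(sub0r x) functionalB // functional0 sub0r.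
Qed.

(* Sokal: if eta almost attains opnorm f on the r-ball, then |f (x + eta)| or
   |f (x - eta)| is at least f eta. *)
Lemma sokal_step x r : D x -> 0 < r ->
  exists2 y, D y & p (y - x) <= r /\ 2 / 3 * r * opnorm f <= `|f y|.
Proof.
move=> Dx r_gt0; have [N_le0|N_gt0] := lerP (opnorm f) 0.
  have -> : opnorm f = 0 by apply/le_anti; rewrite N_le0 opnorm_ge0.
  by exists x => //; rewrite subrr seminorm0 mulr0 normr_ge0 (ltW r_gt0).
have N3_gt0 : 0 < opnorm f / 3 by rewrite divr_gt0.
have [_ [xi [Dxi pxi_le1] <-] fxi_big] := sup_adherent N3_gt0 opnorm_has_sup.
case: f_bounded => fD fZ _.
set eta := r%:C *: xi.
have Deta : D eta by exact: subspaceZ.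
have peta : p eta <= r by rewrite seminormZ // gtr0_norm //; nra.
have feta : 2 / 3 * r * opnorm f < f eta by rewrite fZ //; rewrite -/(opnorm f) in fxi_big; nra.
have [fx_plus|fx_minus] := lerP (f eta) `|f (x + eta)|.
  by exists (x + eta); [exact: subspaceD | rewrite addrC addKr; split; lra].
exists (x - eta); first exact: subspaceB.
rewrite addrC addKr seminormN //; split=> //.
move: fx_minus; rewrite fD // functionalB // => fx_minus.
have := ler_norm (f x + f eta); have := ler_norm (f eta - f x); rewrite distrC; lra.
Qed.

End BoundedFunctional.

Lemma geometric_steps_limit (u : nat -> H) : (forall n, D (u n)) ->
  (forall n, p (u n.+1 - u n) <= 3 ^- n.+1) ->
  exists2 l, D l & forall n, p (l - u n) <= 3 ^- n / 2.
Proof.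
move=> Du step.
have tail n k : p (u (n + k)%N - u n) <= (3 ^- n - 3 ^- (n + k)) / 2.
  elim: k => [|k IHk]; first by rewrite addn0 !subrr seminorm0 mul0r.
  rewrite addnS -[u (n + k).+1](subrK (u (n + k)%N)) -addrA.
  apply: le_trans (seminormD (subspaceB _ _) (subspaceB _ _)) _ => //.
  by have := step (n + k)%N; have := exp3VS R (n + k); lra.
have tail_le n m : (n <= m)%N -> p (u m - u n) <= 3 ^- n / 2.
  move=> /subnKC <-; apply: le_trans (tail n (m - n)%N) _.
  by have := exp3V_gt0 R (n + (m - n)); lra.
have [l Dl ul] : exists2 l, D l & forall e : R, 0 < e ->
    exists N, forall n, (N <= n)%N -> p (u n - l) < e.
  apply: seminorm_complete => // e e_gt0; have [N eN] := exp3V_small e_gt0.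
  exists N => m n Nm Nn; have [nm|mn] := leqP n m.
    by apply: le_lt_trans (tail_le _ _ nm) _; have := eN n Nn; have := exp3V_gt0 R n; lra.
  rewrite seminormB //; apply: le_lt_trans (tail_le _ _ (ltnW mn)) _.
  by have := eN m Nm; have := exp3V_gt0 R m; lra.
exists l => // n; apply/ler_addgt0Pr => e e_gt0.
have [N uNl] := ul e e_gt0; set k := maxn N n.
rewrite -[l](subrK (u k)) -addrA.
apply: le_trans (seminormD (subspaceB Dl (Du k)) (subspaceB (Du k) (Du n))) _.
have := uNl k (leq_maxl _ _); rewrite seminormB //.
by have := tail_le n k (leq_maxr _ _); lra.
Qed.

(* x_(n+1) is Sokal's step for f n from x_n with radius 3^-(n+1), and the limit l moves
   at most half that radius further, whence the factor 2/3 - 1/2 = 1/6. *)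
Lemma gliding_hump (f : nat -> H -> R) : (forall n, bounded_functional (f n)) ->
  exists2 l, D l & forall n, 3 ^- n.+1 * opnorm (f n) / 6 <= `|f n l|.
Proof.
move=> f_bounded.
have /choice[step hstep] : forall nx : nat * H, exists y, D nx.2 -> D y /\
    p (y - nx.2) <= 3 ^- nx.1.+1 /\ 2 / 3 * 3 ^- nx.1.+1 * opnorm (f nx.1) <= `|f nx.1 y|.
  case=> n x; have [Dx|NDx] := pselect (D x); last by exists x.
  by have [y Dy hy] := sokal_step (f_bounded n) Dx (exp3V_gt0 R n.+1); exists y.
pose u := fix u n := if n is n'.+1 then step (n', u n') else 0.
have Du n : D (u n) by elim: n => [|n IHn] //=; case: (hstep (n, u n) IHn).
have [l Dl ul] := geometric_steps_limit Du (fun n => (hstep (n, u n) (Du n)).2.1).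
exists l => // n; have [_ [_ fun_big]] := hstep (n, u n) (Du n).
have := ler_norm_opnorm (f_bounded n) (subspaceB Dl (Du n.+1)).
have := ler_wpM2l (opnorm_ge0 (f_bounded n)) (ul n.+1).
have split_l : f n (u n.+1) = f n l - f n (l - u n.+1).
  by rewrite -functionalB //; [rewrite opprB addrC subrK | exact: subspaceB].
have := ler_normB (f n l) (f n (l - u n.+1)); rewrite -split_l.
have := exp3V_gt0 R n.+1; have := opnorm_ge0 (f_bounded n); rewrite /= in fun_big *; nra.
Qed.

Theorem uniform_boundedness (I : Type) (phi : I -> H -> R) (rho : I -> R) :
  (forall i, 0 <= rho i) -> (forall i, bounded_functional (phi i)) ->
  (forall x, D x -> exists c, forall i, `|phi i x| <= rho i * c) ->
  exists2 M, 0 <= M & forall i x, D x -> phi i x <= M * rho i * p x.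
Proof.
move=> rho_ge0 phi_bounded pointwise.
suff [M M_ge0 phiM] : exists2 M, 0 <= M & forall i, opnorm (phi i) <= M * rho i.
  exists M => // i x Dx; apply: le_trans (ler_opnorm (phi_bounded i) Dx) _.
  by apply: ler_wpM2r; [exact: seminorm_ge0 | exact: phiM].
(* Otherwise pick i n with opnorm (phi (i n)) > 6 (n+1) 3^(n+1) rho (i n): at the hump l
   the pointwise bound c of l would exceed every n + 1. *)
apply: contrapT => unbounded.
have /choice[i hi] : forall n : nat, exists i, 6 * n.+1%:R * 3 ^+ n.+1 * rho i < opnorm (phi i).
  move=> n; apply: contrapT => /forallNP small; apply: unbounded.
  exists (6 * n.+1%:R * 3 ^+ n.+1) => [|j]; first by rewrite !mulr_ge0 ?exprn_ge0.
  by rewrite leNgt; apply/negP/small.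
have [l Dl hl] := gliding_hump (fun n => phi_bounded (i n)).
have [c hc] := pointwise l Dl.
have n_lt_c n : n.+1%:R < c.
  have scale : 3 ^- n.+1 * (6 * n.+1%:R * 3 ^+ n.+1 * rho (i n)) / 6 = n.+1%:R * rho (i n) :> R.
    by field; rewrite expf_neq0 // pnatr_eq0.
  have lt_hump : n.+1%:R * rho (i n) < 3 ^- n.+1 * opnorm (phi (i n)) / 6.
    by rewrite -scale ltr_pM2r ?invr_gt0 ?ltr0n // ltr_pM2l ?exp3V_gt0.
  have := hl n; have := hc (i n); have := rho_ge0 (i n); nra.
have := archi_boundP (ltW (lt_trans ltr01 (n_lt_c 0%N))).
by have := n_lt_c (Num.Def.archi_bound c); rewrite -natr1; lra.
Qed.

End UniformBoundedness.

Section GraphNorm.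
Variables (R : realType) (H : hilbert R) (D : H -> Prop) (T : H -> H).
Hypothesis lin : lin_op D T.
Implicit Types (x y w : H).

Lemma lin_op_dom0 : D 0.
Proof. by case: lin. Qed.

Lemma lin_op_domZ a x : D x -> D (a *: x).
Proof. by move=> Dx; have [] := lin.2 a x 0 Dx lin_op_dom0; rewrite addr0. Qed.

Lemma lin_op_domD x y : D x -> D y -> D (x + y).
Proof. by move=> Dx Dy; have [] := lin.2 1 x y Dx Dy; rewrite scale1r. Qed.

Lemma lin_op_domB x y : D x -> D y -> D (x - y).
Proof. by move=> Dx Dy; rewrite -scaleN1r; apply: lin_op_domD => //; apply: lin_op_domZ. Qed.

Lemma lin_opD x y : D x -> D y -> T (x + y) = T x + T y.
Proof. by move=> Dx Dy; have [] := lin.2 1 x y Dx Dy; rewrite !scale1r. Qed.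

Lemma lin_op0 : T 0 = 0.
Proof.
have := lin_opD lin_op_dom0 lin_op_dom0; rewrite addr0.
by move/(congr1 (fun v => v - T 0)); rewrite subrr addrK => <-.
Qed.

Lemma lin_opZ a x : D x -> T (a *: x) = a *: T x.
Proof. by move=> Dx; have [] := lin.2 a x 0 Dx lin_op_dom0; rewrite !addr0 lin_op0 addr0. Qed.

Lemma lin_opB x y : D x -> D y -> T (x - y) = T x - T y.
Proof.
move=> Dx Dy; have DNy : D ((-1) *: y) by apply: lin_op_domZ.
by rewrite -scaleN1r lin_opD // lin_opZ // scaleN1r.
Qed.

Definition graph_norm x := hnorm x + hnorm (T x).

Lemma graph_norm_ge0 x : 0 <= graph_norm x.
Proof. by rewrite addr_ge0 ?hnorm_ge0. Qed.

Lemma graph_normD x y : D x -> D y -> graph_norm (x + y) <= graph_norm x + graph_norm y.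
Proof.
move=> Dx Dy; rewrite /graph_norm lin_opD //.
by have := hnormD x y; have := hnormD (T x) (T y); lra.
Qed.

Lemma graph_normZ (t : R) x : D x -> graph_norm (t%:C *: x) = `|t| * graph_norm x.
Proof. by move=> Dx; rewrite /graph_norm lin_opZ // !hnormZ mulrDr. Qed.

Lemma rinner_bounded_functional v : bounded_functional D graph_norm (rinner v).
Proof.
split; [by move=> x y _ _; rewrite rinnerDr | by move=> t x _; rewrite rinnerZr |].
exists (hnorm v) => x _; apply: le_trans (cauchy_schwarz v x) _.
by rewrite ler_wpM2l ?hnorm_ge0 // lerDl hnorm_ge0.
Qed.

Hypothesis closed : closed_op D T.

Lemma graph_norm_complete (u : nat -> H) : (forall n, D (u n)) ->
  (forall e : R, 0 < e -> exists N, forall m n, (N <= m)%N -> (N <= n)%N ->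
     graph_norm (u m - u n) < e) ->
  exists2 l, D l & forall e : R, 0 < e -> exists N, forall n, (N <= n)%N ->
     graph_norm (u n - l) < e.
Proof.
move=> Du u_cauchy.
have [l ul] : exists l, cvg_to u l.
  apply: inner_complete => e e_gt0; have [N uN] := u_cauchy e e_gt0.
  exists N => m n Nm Nn; apply: le_lt_trans (uN m n Nm Nn).
  by rewrite lerDl hnorm_ge0.
have [Tl Tul] : exists Tl, cvg_to (fun n => T (u n)) Tl.
  apply: inner_complete => e e_gt0; have [N uN] := u_cauchy e e_gt0.
  exists N => m n Nm Nn; apply: le_lt_trans (uN m n Nm Nn).
  by rewrite /graph_norm lin_opB // lerDr hnorm_ge0.
have [Dl TlE] := closed Du ul Tul.
exists l => // e e_gt0; have e2_gt0 : 0 < e / 2 by rewrite divr_gt0.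
have [N1 uN1] := ul _ e2_gt0; have [N2 uN2] := Tul _ e2_gt0.
exists (maxn N1 N2) => n; rewrite geq_max => /andP[N1n N2n].
have := uN1 n N1n; have := uN2 n N2n.
by rewrite /graph_norm lin_opB // TlE; lra.
Qed.

Lemma adjoint_form_bound : (forall y, D y -> adj_dom D T y) ->
  exists2 M, 0 <= M & forall w x, D w -> D x ->
    rinner (T w) x <= M * hnorm w * graph_norm x.
Proof.
move=> adj.
have pointwise x : D x -> exists c, forall w : {w | D w},
    `|rinner (T (sval w)) x| <= hnorm (sval w) * c.
  move=> Dx; have [z Tz] := adj x Dx; exists (hnorm z) => -[w Dw] /=.
  by rewrite /rinner Tz //; apply: cauchy_schwarz.
have [M M_ge0 hM] := uniform_boundedness lin_op_dom0 lin_op_domD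
  (fun t => lin_op_domZ t%:C) graph_norm_ge0 graph_normD graph_normZ
  graph_norm_complete (fun w : {w | D w} => hnorm_ge0 (sval w))
  (fun w : {w | D w} => rinner_bounded_functional (T (sval w))) pointwise.
by exists M => // w x Dw; apply: (hM (exist D w Dw)).
Qed.

Lemma bounded_closed_op_total (C : R) : densely_defined D ->
  (forall x, D x -> hnorm (T x) <= C * hnorm x) -> forall x, D x.
Proof.
move=> dense TC x.
have /choice[u xu] : forall n, exists u, D u /\ hnorm (x - u) < 3 ^- n.
  by move=> n; apply: dense; apply: exp3V_gt0.
have Du n : D (u n) by case: (xu n).
have ux : cvg_to u x.
  move=> e e_gt0; have [N eN] := exp3V_small e_gt0; exists N => n Nn.
  by rewrite hnormB; apply: lt_trans (eN n Nn); case: (xu n).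
have [y Tuy] : exists y, cvg_to (fun n => T (u n)) y.
  apply: inner_complete => e e_gt0.
  have C1_gt0 : 0 < `|C| + 1 by have := normr_ge0 C; lra.
  set d := e / (2 * (`|C| + 1)).
  have d_gt0 : 0 < d by rewrite divr_gt0 ?mulr_gt0.
  have [N dN] := exp3V_small d_gt0; exists N => m n Nm Nn.
  rewrite -lin_opB //; apply: le_lt_trans (TC _ (lin_op_domB (Du m) (Du n))) _.
  have umn : hnorm (u m - u n) < 2 * d.
    have := hnormD (u m - x) (x - u n); rewrite addrA subrK (hnormB (u m)).
    by have := dN m Nm; have := dN n Nn; case: (xu m) => _; case: (xu n) => _; lra.
  have e_d : e = (`|C| + 1) * (2 * d) by rewrite /d; field; rewrite gt_eqF.
  rewrite e_d; apply: le_lt_trans (_ : _ <= (`|C| + 1) * hnorm (u m - u n)) _.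
    by rewrite ler_wpM2r ?hnorm_ge0 // (le_trans (ler_norm C)) ?lerDl.
  by rewrite ltr_pM2l.
by case: (closed Du ux Tuy).
Qed.

End GraphNorm.

Lemma nilpotent_chain_bound (R : realDomainType) (M : R) (n : nat) (a : nat -> R) :
  0 <= M -> (0 < n)%N -> (forall k, 0 <= a k) -> a n = 0 ->
  (forall k, (k.+2 <= n)%N -> a k.+1 ^+ 2 <= M * a k * (a k.+1 + a k.+2)) ->
  a 1%N <= iter n.-1 (fun c => M * (1 + c)) 0 * a 0%N.
Proof.
move=> M_ge0 n_gt0 a_ge0 an0 chain; set C := fun c => M * (1 + c).
have C_ge0 j : 0 <= iter j C 0.
  by elim: j => [|j IHj] //=; rewrite /C mulr_ge0 ?addr_ge0.
suff bound j k : (k.+1 + j)%N = n -> a k.+1 <= iter j C 0 * a k.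
  by apply: bound; rewrite add1n prednK.
elim: j k => [|j IHj] k kjn; first by move: kjn; rewrite addn0 => ->; rewrite an0 /= mul0r.
have k2n : (k.+2 <= n)%N by rewrite -kjn addnS ltnS leq_addr.
have := IHj k.+1 (etrans (addSnnS _ _) kjn); rewrite iterS.
have := C_ge0 j; set c := iter j C 0 => c_ge0 a2_le.
set K := C c * a k; have K_ge0 : 0 <= K by rewrite !mulr_ge0 ?addr_ge0.
have : a k.+1 ^+ 2 <= K * a k.+1.
  apply: le_trans (chain k k2n) _.
  have -> : K * a k.+1 = M * a k * (a k.+1 + c * a k.+1) by rewrite /K /C; ring.
  by apply: ler_wpM2l; rewrite ?mulr_ge0 ?lerD2l.
by have := a_ge0 k.+1; nra.
Qed.

Lemma nilpotent_eq0 (V : zmodType) (f : V -> V) (n : nat) :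
  (forall v, f (f v) = 0 -> f v = 0) -> (0 < n)%N -> (forall x, iter n f x = 0) ->
  forall x, f x = 0.
Proof.
move=> f2_eq0; elim: n => // -[_ _ fn|n IHn _ fn]; first exact: fn.
apply: IHn => // y; rewrite iterS; apply: f2_eq0.
by rewrite -!iterS; apply: fn.
Qed.

Lemma nilpotent_bounded (R : realType) (H : hilbert R) (D : H -> Prop) (T : H -> H) (M : R) : nilpotent_op D T -> 0 <= M ->
  (forall w x, D w -> D x -> rinner (T w) x <= M * hnorm w * graph_norm T x) ->
  exists C, forall x, D x -> hnorm (T x) <= C * hnorm x.
Proof.
case=> n [n_gt0 [dom_pow Tn0]] M_ge0 form.
exists (iter n.-1 (fun c => M * (1 + c)) 0) => x Dx.
have Dit k : (k < n)%N -> D (iter k T x) by move=> lt_kn; case: (dom_pow k.+1 lt_kn x).2.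
apply: (nilpotent_chain_bound (a := fun k => hnorm (iter k T x))) => //.
- by move=> k; apply: hnorm_ge0.
- by rewrite Tn0 // hnorm0.
- move=> k lt_k2n; rewrite hnorm_sq.
  exact: form (Dit k (leq_trans (leqnSn _) lt_k2n)) (Dit k.+1 lt_k2n).
Qed.

Section SymmetricHyponormal.
Variables (R : realType) (H : hilbert R) (D : H -> Prop) (T : H -> H).
Hypothesis sym_or_hypo : symmetric_op D T \/ hyponormal_op D T.

Lemma symmetric_or_hyponormal_adj_dom y : D y -> adj_dom D T y.
Proof.
case: sym_or_hypo => [sym|hypo] Dy; first by exists (T y); apply: sym.
by have [z [Tz _]] := hypo y Dy; exists z.
Qed.

Lemma symmetric_or_hyponormal_sq_eq0 v : D v -> D (T v) -> T (T v) = 0 -> T v = 0.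
Proof.
move=> Dv DTv TTv0; apply: inner_eq0.
case: sym_or_hypo => [sym|hypo]; first by rewrite (sym _ DTv v Dv) TTv0 inner0r.
have [z [Tz z_le]] := hypo _ DTv; rewrite (Tz v Dv).
suff -> : z = 0 by rewrite inner0r.
by apply: hnorm_eq0; apply/le_anti; rewrite hnorm_ge0 andbT -(hnorm0 H) -TTv0.
Qed.

End SymmetricHyponormal.

Theorem proposition2p3 (R : realType) (H : hilbert R) (D : H -> Prop) (T : H -> H) :
  lin_op D T -> densely_defined D -> closed_op D T -> nilpotent_op D T ->
  ((forall y, D y -> adj_dom D T y) ->
     (forall x, D x) /\ (exists M : R, forall x, hnorm (T x) <= M * hnorm x))
  /\ (symmetric_op D T \/ hyponormal_op D T -> forall x, D x /\ T x = 0).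
Proof.
move=> lin dense closed nil.
have bounded_total : (forall y, D y -> adj_dom D T y) ->
    (forall x, D x) /\ (exists M : R, forall x, hnorm (T x) <= M * hnorm x).
  move=> adj; have [M M_ge0 form] := adjoint_form_bound lin closed adj.
  have [C TC] := nilpotent_bounded nil M_ge0 form.
  have total := bounded_closed_op_total lin closed dense TC.
  by split=> //; exists C => x; apply: TC.
split=> // sym_or_hypo.
have [total _] := bounded_total (symmetric_or_hyponormal_adj_dom sym_or_hypo).
have [n [n_gt0 [_ Tn0]]] := nil.
have T2 v : T (T v) = 0 -> T v = 0 :=
  symmetric_or_hyponormal_sq_eq0 sym_or_hypo (total v) (total (T v)).
have T0 := nilpotent_eq0 T2 n_gt0 (fun x => Tn0 x (total x)).
by move=> x; split.
Qed.
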